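(* Let $G$ be a graph without isolated vertices and let $T$ be a solution counting decision tree for $\varphi(G)$. Let $u$ be a node of $T$ labelled by a variable $x$, and let $S\subseteq V(G)$ be such that no two elements of $S$ are adjacent or have a common neighbour in $G$, and no element of $S$ is forced to $1$ by $A_u$. Then $weight(\mathbf{P}^u(S))\leq \alpha^u(S)$.
   Context: $\varphi(G)$ is the CNF on variables $V(G)$ with clauses $(u\vee v)$ for all $\{u,v\}\in E(G)$. Boolean functions are identified with their sets of satisfying assignments (sets of literals); for a set $S$ of literals, the restriction $F|_S$ is the function on the remaining variables whose satisfying assignments are those $S'$ with $S\cup S'$ satisfying $F$. Decision tree for a function $F$ that is not constant false: the root is labelled by some variable $x\in Var(F)$; for each literal $\ell\in\{x,\neg x\}$ occurring in some satisfying assignment of $F$, the root has an outgoing edge labelled $\ell$; if $|Var(F)|=1$ its head is an unlabelled leaf, otherwise its head is the root of a decision tree for $F|_\ell$. A solution counting decision tree (SCDT) for $F$ is a decision tree for $F$ in which an edge leaving node $w$ labelled by literal $\ell$ has weight $|F|_{A_w\cup\{\ell\}}|/|F|_{A_w}|$, where $A_w$ is the set of literals labelling the root-$w$ path. The weight of a path is the product of its edge weights, and the weight of a set of paths is the sum of their weights. A variable $y\in V(G)$ is forced to $1$ by $A_u$ if some neighbour $z$ of $y$ in $G$ satisfies $\neg z\in A_u$. $N^u(y)$ is the set of neighbours $z$ of $y$ such that $z$ does not occur in $A_u$ and $z$ is not forced to $1$ by $A_u$. For $d\geq 0$, $c_d=1-2^{-(2d+1)}$, and for $S\subseteq V(G)$,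 $\alpha^u(S)=\prod_{y\in S}c_{|N^u(y)|}$. Identifying $S$ with the set of positive literals of its elements, $\mathbf{P}^u(S)$ is the set of paths $P$ of $T$ from $u$ to a leaf such that $S\subseteq A(P)$, where $A(P)$ is the set of literals labelling the edges of $P$. *)

(* Weights are rationals (all quantities involved are rational). *)
From mathcomp Require Import all_boot all_order all_algebra.
Set Implicit Arguments. Unset Strict Implicit. Unset Printing Implicit Defensive.
Import Order.TTheory GRing.Theory Num.Theory.
Local Open Scope ring_scope.

Section Defs.
Variable V : finType.

(* a literal is a pair (variable, polarity): (x,true) = x, (x,false) = ~x *)
Definition lit := (V * bool)%type.

Definition simple_graph (e : rel V) : Prop := symmetric e /\ irreflexive e.
Definition no_isolated (e : rel V) : Prop := forall v, exists w, e v w.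

Definition sat_phi (e : rel V) (s : {ffun V -> bool}) : bool :=
  [forall u, forall v, e u v ==> (s u || s v)].

Definition consistent (s : {ffun V -> bool}) (A : seq lit) : bool :=
  all (fun l => s l.1 == l.2) A.

(* |phi(G)|_A| : number of satisfying assignments of the restriction of phi(G)
   by the (consistent) literal set A, i.e. number of satisfying total
   assignments of phi(G) extending A *)
Definition cnt (e : rel V) (A : seq lit) : nat :=
  #|[set s : {ffun V -> bool} | sat_phi e s && consistent s A]|.

Definition occurs (z : V) (A : seq lit) : bool := has (fun l => l.1 == z) A.

(* Var(phi(G)|_A) = V(G) minus the variables of A *)
Definition nvars (A : seq lit) : nat := #|[set v : V | ~~ occurs v A]|.

End Defs.

(* decision trees: a node labelled x has an optional edge labelled ~x (first
   child) and an optional edge labelled x (second child); None = no edge. *)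
Inductive dtree (V : Type) : Type :=
| Leaf
| Node of V & option (dtree V) & option (dtree V).
Arguments Leaf {V}.

Section Trees.
Variable V : finType.
Variable e : rel V.

(* is_dt A t : t is a decision tree for phi(G)|_A (which must not be constant
   false); A is the set of literals on the path from the root. *)
Fixpoint is_dt (A : seq (lit V)) (t : dtree V) : Prop :=
  match t with
  | Leaf => False
  | Node x c0 c1 =>
      (0 < cnt e A)%N /\ ~~ occurs x A /\
      (c0 <> None <-> (0 < cnt e ((x, false) :: A))%N) /\
      (c1 <> None <-> (0 < cnt e ((x, true) :: A))%N) /\
      match c0 with
      | Some t0 => if nvars A == 1%N then t0 = Leaf else is_dt ((x, false) :: A) t0
      | None => True end /\
      match c1 with
      | Some t1 => if nvars A == 1%N then t1 = Leaf else is_dt ((x, true) :: A) t1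
      | None => True end
  end.

Definition child (t : dtree V) (b : bool) : option (dtree V) :=
  match t with Leaf => None | Node _ c0 c1 => if b then c1 else c0 end.

Fixpoint subtree (t : dtree V) (p : seq bool) : option (dtree V) :=
  match p with
  | [::] => Some t
  | b :: p' => match child t b with Some t' => subtree t' p' | None => None end
  end.

Fixpoint path_lits (t : dtree V) (p : seq bool) : seq (lit V) :=
  match p, t with
  | b :: p', Node x _ _ =>
      (x, b) :: match child t b with Some t' => path_lits t' p' | None => [::] end
  | _, _ => [::]
  end.

Fixpoint leaf_paths (t : dtree V) : seq (seq bool) :=
  match t with
  | Leaf => [:: [::]]
  | Node _ c0 c1 =>
      map (cons false) (if c0 is Some t0 then leaf_paths t0 else [::]) ++
      map (cons true)  (if c1 is Some t1 then leaf_paths t1 else [::])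
  end.

(* SCDT weight of the path p from the node t, where A is the set of literals
   labelling the path from the root of the whole tree to t: product of the
   edge weights |F|_{A_w u {l}}| / |F|_{A_w}|. *)
Fixpoint pweight (A : seq (lit V)) (t : dtree V) (p : seq bool) : rat :=
  match p, t with
  | b :: p', Node x _ _ =>
      ((cnt e ((x, b) :: A))%:R / (cnt e A)%:R) *
      match child t b with Some t' => pweight ((x, b) :: A) t' p' | None => 0 end
  | _, _ => 1
  end.

Definition forced (A : seq (lit V)) (y : V) : bool :=
  [exists z, e y z && ((z, false) \in A)].

Definition Nu (A : seq (lit V)) (y : V) : {set V} :=
  [set z | e y z && ~~ occurs z A && ~~ forced A z].

Definition cd (d : nat) : rat := 1 - (2 ^+ (2 * d + 1))^-1.

Definition alpha (A : seq (lit V)) (S : {set V}) : rat :=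
  \prod_(y in S) cd #|Nu A y|.

Definition weightP (T : dtree V) (pu : seq bool) (S : {set V}) : rat :=
  match subtree T pu with
  | Some tu =>
      \sum_(q <- leaf_paths tu | [forall y in S, (y, true) \in path_lits tu q])
        pweight (path_lits T pu) tu q
  | None => 0
  end.

End Trees.

(* Along a solution counting decision tree the edge weights telescope: the
   weight of the paths below u that set every vertex of S to 1 is the fraction
   of the solutions of phi(G)|A_u doing so, and 0 if A_u already assigns a
   vertex of S.  This fraction is bounded one vertex y of S at a time.
   Sending a solution with y = 1 to the one with y = 0 and every neighbour of
   y set to 1 keeps the other vertices of S at 1 and is at most
   2^d-to-one, d = |N^u(y)|, because the neighbours of y outside N^u(y) are 1
   in every solution.  Hence at most a fraction 2^d/(2^d + 1) <= c_d of the
   solutions with S :\ y at 1 also have y = 1. *)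

From mathcomp Require Import all_boot all_order all_algebra.
From mathcomp Require Import zify lra.
Set Implicit Arguments. Unset Strict Implicit. Unset Printing Implicit Defensive.
Import Order.TTheory GRing.Theory Num.Theory.
Local Open Scope ring_scope.

Section Scdt.
Variables (V : finType) (e : rel V).
Implicit Types (A B : seq (lit V)) (S : {set V}) (s : {ffun V -> bool}) (t : dtree V)
  (x y z : V).

Lemma dtree_child_ind (P : dtree V -> Prop) :
  P Leaf ->
  (forall x c0 c1, (forall b t, child (Node x c0 c1) b = Some t -> P t) ->
     P (Node x c0 c1)) ->
  forall t, P t.
Proof.
move=> PL PN; fix IH 1; case=> [|x c0 c1]; first exact: PL.
apply: PN => -[] t /=.
- case: c1 => [t1 [<-]|] /=; [exact: IH | discriminate].
- case: c0 => [t0 [<-]|] /=; [exact: IH | discriminate].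
Qed.

Lemma subtree_cons t b p :
  subtree t (b :: p) = if child t b is Some t' then subtree t' p else None.
Proof. by []. Qed.

Lemma path_lits_cons x (c0 c1 : option (dtree V)) b p :
  path_lits (Node x c0 c1) (b :: p) =
  (x, b) :: (if child (Node x c0 c1) b is Some t then path_lits t p else [::]).
Proof. by []. Qed.

Lemma pweight_cons A x (c0 c1 : option (dtree V)) b p :
  pweight e A (Node x c0 c1) (b :: p) =
  (cnt e ((x, b) :: A))%:R / (cnt e A)%:R *
  (if child (Node x c0 c1) b is Some t then pweight e ((x, b) :: A) t p else 0).
Proof. by []. Qed.

Lemma occurs_cons z x b A : occurs z ((x, b) :: A) = (x == z) || occurs z A.
Proof. by []. Qed.

Lemma occurs_perm z A B : perm_eq A B -> occurs z A = occurs z B.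
Proof. by move=> pAB; rewrite /occurs (perm_has _ pAB). Qed.

Lemma cnt_perm A B : perm_eq A B -> cnt e A = cnt e B.
Proof. by move=> pAB; apply: eq_card => s; rewrite !inE /consistent (perm_all _ pAB). Qed.

Lemma nvars_perm A B : perm_eq A B -> nvars A = nvars B.
Proof. by move=> pAB; apply: eq_card => v; rewrite !inE (occurs_perm _ pAB). Qed.

Lemma nvars1_occurs A x b : nvars A = 1%N -> ~~ occurs x A ->
  forall y, occurs y ((x, b) :: A).
Proof.
move=> nvA1 xA y; rewrite occurs_cons; case: eqVneq => //= xy.
apply/negPn/negP => yA; have : (#|[set x; y]| <= nvars A)%N.
  by apply/subset_leq_card/subsetP => z; rewrite !inE => /orP[] /eqP ->.
by rewrite cards2 xy nvA1.
Qed.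

Definition child_ok A x b (c : option (dtree V)) : Prop :=
  (c <> None <-> (0 < cnt e ((x, b) :: A))%N) /\
  if c is Some t then
    if nvars A == 1%N then t = Leaf else is_dt e ((x, b) :: A) t
  else True.

Lemma is_dt_node A x (c0 c1 : option (dtree V)) :
  is_dt e A (Node x c0 c1) <->
  [/\ (0 < cnt e A)%N, ~~ occurs x A &
      forall b, child_ok A x b (child (Node x c0 c1) b)].
Proof.
split=> [[cA [xA [H0 [H1 [Hc0 Hc1]]]]] | [cA xA ok]]; first by split=> // -[].
by have [H0 Hc0] := ok false; have [H1 Hc1] := ok true.
Qed.

Lemma is_dt_perm t : forall A B, perm_eq A B -> is_dt e A t -> is_dt e B t.
Proof.
elim/dtree_child_ind: t => // x c0 c1 IH A B pAB.
rewrite !is_dt_node -(cnt_perm pAB) -(occurs_perm _ pAB) => -[cA xA ok].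
split=> // b; have pABb : perm_eq ((x, b) :: A) ((x, b) :: B) by rewrite perm_cons.
move: (ok b) (IH b); rewrite /child_ok -(cnt_perm pABb) -(nvars_perm pAB).
case: (child _ b) => [t|//] [Hne Ht] IHt; split=> //.
by case: ifP Ht => // _; apply: IHt pABb.
Qed.

Definition valid_dt A t : Prop :=
  if t is Leaf then (0 < cnt e A)%N /\ (forall y, occurs y A) else is_dt e A t.

Lemma is_dt_valid A t : is_dt e A t -> valid_dt A t.
Proof. by case: t. Qed.

Lemma valid_dt_cnt A t : valid_dt A t -> (0 < cnt e A)%N.
Proof. by case: t => [[]|x c0 c1 /is_dt_node[]]. Qed.

Lemma valid_dt_perm A B t : perm_eq A B -> valid_dt A t -> valid_dt B t.
Proof.
case: t => [|x c0 c1] pAB; last exact: is_dt_perm.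
by rewrite /= (cnt_perm pAB) => -[cB occ]; split=> // y; rewrite -(occurs_perm _ pAB).
Qed.

Lemma valid_dt_child A x (c0 c1 : option (dtree V)) b : is_dt e A (Node x c0 c1) ->
  if child (Node x c0 c1) b is Some t then valid_dt ((x, b) :: A) t
  else cnt e ((x, b) :: A) = 0%N.
Proof.
case/is_dt_node => _ xA /(_ b) [].
case: (child _ b) => [t|] Hne; last first.
  by move=> _; apply/eqP; rewrite -leqn0 leqNgt; apply/negP => /Hne.
case: ifP => [/eqP nvA1 -> | _ /is_dt_valid //].
by split; [exact/Hne | exact: nvars1_occurs].
Qed.

Lemma valid_dt_subtree p : forall A t t', valid_dt A t -> subtree t p = Some t' ->
  valid_dt (rev (path_lits t p) ++ A) t'.
Proof.
elim: p => [|b p IH] A t t' Ht; first by case: t Ht => [|x c0 c1] Ht [<-].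
case: t Ht => [//|x c0 c1] Ht; rewrite subtree_cons path_lits_cons.
have := valid_dt_child b Ht; case: (child _ b) => [t|//] Hv Hs.
by rewrite rev_cons cat_rcons; apply: IH Hv Hs.
Qed.

Definition sols A := [set s | sat_phi e s && consistent s A].

(* The numerator of the weight of the paths through S: a variable of S that
   is already assigned by A labels no edge below the node, so it must be
   fresh as well as true. *)
Definition cnt_fresh A S :=
  #|[set s in sols A | [forall y in S, s y && ~~ occurs y A]]|.

Definition sols_true A S := [set s in sols A | [forall y in S, s y]].

Lemma cnt_fresh_le A S : (cnt_fresh A S <= cnt e A)%N.
Proof. by apply/subset_leq_card/subsetP => s; rewrite inE => /andP[]. Qed.

Lemma cnt_fresh_set0 A : cnt_fresh A set0 = cnt e A.
Proof.
apply: eq_card => s; rewrite inE; case: (s \in sols A) => //=.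
by apply/forall_inP => y; rewrite inE.
Qed.

Lemma cnt_fresh_occurs A S y : y \in S -> occurs y A -> cnt_fresh A S = 0%N.
Proof.
move=> yS yA; apply: eq_card0 => s; rewrite inE.
by apply/negP => /andP[_ /forall_inP/(_ y yS)]; rewrite yA andbF.
Qed.

Lemma cnt_fresh_split A S x : ~~ occurs x A ->
  cnt_fresh A S = (cnt_fresh ((x, false) :: A) S + cnt_fresh ((x, true) :: A) (S :\ x))%N.
Proof.
move=> xA; rewrite /cnt_fresh -(cardsID [set s : {ffun V -> bool} | s x]) addnC.
congr (_ + _); apply: eq_card => s; rewrite !inE;
  case sx: (s x) => /=; rewrite sx /= ?andbF ?andbT //; congr (_ && _).
- by apply: eq_forallb => y; case: (eqVneq y x) => [->|]; rewrite ?sx ?andbF.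
- apply: eq_forallb => y; rewrite in_setD1.
  by case: (eqVneq y x) => [->|] //=; rewrite sx (negbTE xA) implybT.
Qed.

Lemma cnt_fresh_sols_true A S : {in S, forall y, ~~ occurs y A} ->
  cnt_fresh A S = #|sols_true A S|.
Proof.
move=> fresh; apply: eq_card => s; rewrite !inE; congr (_ && _).
by apply: eq_forallb => y; case: (boolP (y \in S)) => //= /fresh ->; rewrite andbT.
Qed.

Definition all_pos S (L : seq (lit V)) := [forall y in S, (y, true) \in L].

Lemma all_pos_cons S x b L :
  all_pos S ((x, b) :: L) = all_pos (if b then S :\ x else S) L.
Proof.
apply: eq_forallb => y; rewrite in_cons xpair_eqE.
case: b; rewrite ?andbF // in_setD1.
by case: (eqVneq y x) => //=; case: (y \in S).
Qed.

Lemma sum_pweight_all_pos A S t : valid_dt A t ->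
  \sum_(q <- leaf_paths t | all_pos S (path_lits t q)) pweight e A t q =
  (cnt_fresh A S)%:R / (cnt e A)%:R.
Proof.
elim/dtree_child_ind: t A S => [|x c0 c1 IH] A S HA.
  have [cA occ] := HA; rewrite big_cons big_nil addr0.
  have [->|[y yS]] := set_0Vmem S.
    rewrite cnt_fresh_set0 divff ?pnatr_eq0 -?lt0n // ifT //.
    by apply/forall_inP => y; rewrite inE.
  rewrite (cnt_fresh_occurs yS (occ y)) mul0r ifF //.
  by apply/negP => /forall_inP/(_ y yS).
have xA : ~~ occurs x A by case/is_dt_node: HA.
have Hb b :
    \sum_(q <- map (cons b) (if child (Node x c0 c1) b is Some t then leaf_paths t else [::])
          | all_pos S (path_lits (Node x c0 c1) q)) pweight e A (Node x c0 c1) q =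
    (cnt_fresh ((x, b) :: A) (if b then S :\ x else S))%:R / (cnt e A)%:R.
  rewrite big_map; have := valid_dt_child b HA.
  case Hc: (child _ b) => [t|] Hv; last first.
    have := cnt_fresh_le ((x, b) :: A) (if b then S :\ x else S).
    by rewrite Hv leqn0 => /eqP ->; rewrite big_nil mul0r.
  under eq_bigl => q do rewrite path_lits_cons Hc all_pos_cons.
  under eq_bigr => q _ do rewrite pweight_cons Hc.
  rewrite -big_distrr /= (IH b t Hc _ _ Hv) mulrC mulrA divfK //.
  by rewrite pnatr_eq0 -lt0n (valid_dt_cnt Hv).
by rewrite [leaf_paths _]/= big_cat (Hb false) (Hb true) /= -mulrDl -natrD -cnt_fresh_split.
Qed.

Lemma sat_phiP s : reflect (forall u v, e u v -> s u || s v) (sat_phi e s).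
Proof.
apply: (iffP forallP) => [H u v | H u]; first exact: (implyP (forallP (H u) v)).
by apply/forallP => v; apply/implyP/H.
Qed.

Lemma consistentP s A : reflect (forall z b, (z, b) \in A -> s z = b) (consistent s A).
Proof.
by apply: (iffP allP) => [H z b /H /eqP | H [z b] /H /= ->].
Qed.

Lemma sols_trueS A S1 S2 : S1 \subset S2 -> sols_true A S2 \subset sols_true A S1.
Proof.
move=> sS12; apply/subsetP => s; rewrite !inE => /andP[-> /forall_inP S2s].
by apply/forall_inP => y /(subsetP sS12) /S2s.
Qed.

Lemma sols_true_set0 A : sols_true A set0 = sols A.
Proof.
apply/setP => s; rewrite inE; case: (s \in sols A) => //=.
by apply/forall_inP => y; rewrite inE.
Qed.

Lemma nbr_true_outside_Nu A s y z : s \in sols A -> ~~ forced e A y -> e y z ->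
  z \notin Nu e A y -> s z.
Proof.
rewrite inE => /andP[/sat_phiP sat /consistentP cons] yf eyz.
rewrite inE eyz negb_and !negbK.
case/orP => [/hasP[[z' b] zbA /= /eqP Ez] | /existsP[w /andP[ezw wA]]].
  move: zbA; rewrite Ez; case: b => zbA; first exact: cons zbA.
  by case/negP: yf; apply/existsP; exists z; rewrite eyz.
by have := sat z w ezw; rewrite (cons _ _ wA) orbF.
Qed.

Definition unset_nbrs y s : {ffun V -> bool} := [ffun v => (v != y) && (e y v || s v)].

Lemma unset_nbrs_sols A S y s : simple_graph e ->
  y \notin S -> ~~ occurs y A -> ~~ forced e A y -> s \in sols_true A S ->
  unset_nbrs y s \in sols_true A S :\: sols_true A (y |: S).
Proof.
move=> [esym eirr] yS yA yf; rewrite inE => /andP[].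
rewrite inE => /andP[/sat_phiP sat /consistentP cons] /forall_inP Strue.
rewrite in_setD; apply/andP; split.
  by apply/negP; rewrite inE => /andP[_ /forall_inP/(_ y (setU11 y S))]; rewrite ffunE eqxx.
rewrite !inE -andbA; apply/and3P; split.
- apply/sat_phiP => u v euv; rewrite !ffunE.
  case: (eqVneq u y) => [Eu | uy] /=.
    have vy : v != y by apply: contraTneq euv => ->; rewrite Eu eirr.
    by rewrite vy -Eu euv.
  case: (eqVneq v y) => [Ev | vy] /=; first by rewrite -Ev (esym v u) euv.
  by have := sat u v euv; case/orP => ->; rewrite ?orbT.
- apply/consistentP => z b zbA; rewrite ffunE.
  have -> : z != y by apply: contraNneq yA => <-; apply/hasP; exists (z, b).
  case eyz: (e y z) => /=; last exact: cons zbA.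
  case: b zbA => // zbA.
  by case/negP: yf; apply/existsP; exists z; rewrite eyz.
- apply/forall_inP => z zS; rewrite ffunE.
  have -> : z != y by apply: contraNneq yS => <-.
  by rewrite Strue ?orbT.
Qed.

(* A solution with y true is recovered from [unset_nbrs y s] and from its
   values on the free neighbours [Nu e A y]; its other neighbours are
   already 1. *)
Lemma card_sols_true_setU1 A S y : simple_graph e ->
  y \notin S -> ~~ occurs y A -> ~~ forced e A y ->
  (#|sols_true A (y |: S)| <=
     2 ^ #|Nu e A y| * #|sols_true A S :\: sols_true A (y |: S)|)%N.
Proof.
move=> Hg yS yA yf.
pose f s := (unset_nbrs y s, Nu e A y :&: [set z | s z]).
have sols_y s : s \in sols_true A (y |: S) -> s \in sols A /\ s y.
  by rewrite inE => /andP[sA /forall_inP/(_ y (setU11 y S))].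
have f_inj : {in sols_true A (y |: S) &, injective f}.
  move=> s1 s2 /sols_y[s1A s1y] /sols_y[s2A s2y] [Hun HN]; apply/ffunP => v.
  case: (eqVneq v y) => [-> | vy]; first by rewrite s1y s2y.
  case eyv: (e y v); last by have := congr1 (fun s => s v) Hun; rewrite !ffunE vy eyv.
  case vN: (v \in Nu e A y).
    by move/setP: HN => /(_ v); rewrite !in_setI vN !inE.
  by rewrite (nbr_true_outside_Nu s1A yf eyv) ?vN // (nbr_true_outside_Nu s2A yf eyv) ?vN.
rewrite -(card_in_imset f_inj) mulnC -card_powerset -cardsX.
apply/subset_leq_card/subsetP => _ /imsetP[s Hs ->].
rewrite in_setX powersetE subsetIl andbT unset_nbrs_sols //.
exact: subsetP (sols_trueS A (subsetUr [set y] S)) s Hs.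
Qed.

Lemma cd_ge0 d : 0 <= cd d.
Proof. by rewrite subr_ge0 invf_le1 ?exprn_ege1 ?exprn_gt0. Qed.

Lemma ler_cd d (a c : nat) : (a <= 2 ^ d * c)%N -> a%:R <= cd d * (a + c)%:R :> rat.
Proof.
move=> le_a; set M := (2 ^ (2 * d + 1))%N.
have le_ac : (a + c <= M * c)%N.
  have : (2 ^ d <= 2 ^ (2 * d))%N by rewrite leq_pexp2l // leq_pmull.
  have := expn_gt0 2 d; rewrite /M addn1 expnS; nia.
have : (a + c)%:R / M%:R <= c%:R :> rat.
  by rewrite ler_pdivrMr ?ltr0n ?expn_gt0 // -natrM ler_nat mulnC.
rewrite /cd -natrX -/M mulrBl mul1r natrD; lra.
Qed.

Lemma alpha_ge0 A S : 0 <= alpha e A S.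
Proof. by apply: prodr_ge0 => y _; apply: cd_ge0. Qed.

Lemma alpha_setU1 A S y : y \notin S ->
  alpha e A (y |: S) = cd #|Nu e A y| * alpha e A S.
Proof. exact: big_setU1. Qed.

Lemma card_sols_true_le_alpha A S : simple_graph e ->
  {in S, forall y, ~~ occurs y A && ~~ forced e A y} ->
  #|sols_true A S|%:R <= alpha e A S * (cnt e A)%:R.
Proof.
move=> Hg; move Hn : #|S| => n; elim: n S Hn => [|n IH] S Hn HS.
  by rewrite (cards0_eq Hn) /alpha big_set0 mul1r sols_true_set0.
have [S0 | [y yS]] := set_0Vmem S; first by rewrite S0 cards0 in Hn.
have [yA yf] := andP (HS y yS).
rewrite -(setD1K yS); set S0 := S :\ y.
have yS0 : y \notin S0 by rewrite !inE eqxx.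
have card_S0 : (#|sols_true A (y |: S0)| + #|sols_true A S0 :\: sols_true A (y |: S0)|)%N =
    #|sols_true A S0|.
  by rewrite -{1}(setIidPr (sols_trueS A (subsetUr [set y] S0))) cardsID.
apply: le_trans (ler_cd (card_sols_true_setU1 Hg yS0 yA yf)) _.
rewrite card_S0 alpha_setU1 // -mulrA ler_wpM2l ?cd_ge0 //; apply: IH.
  by move: Hn; rewrite (cardsD1 y S) yS add1n => -[].
by move=> z; rewrite inE => /andP[_ /HS].
Qed.

End Scdt.

Theorem theorem6 (V : finType) (e : rel V)
  (Hg : simple_graph e) (Hiso : no_isolated e)
  (T : dtree V) (HT : is_dt e [::] T)
  (pu : seq bool) (x : V) (c0 c1 : option (dtree V))
  (Hu : subtree T pu = Some (Node x c0 c1))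
  (S : {set V})
  (HS : forall y1 y2, y1 \in S -> y2 \in S -> y1 != y2 ->
          ~~ e y1 y2 /\ (forall z, ~~ (e y1 z && e y2 z)))
  (Hnf : forall y, y \in S -> ~~ forced e (path_lits T pu) y) :
  weightP e T pu S <= alpha e (path_lits T pu) S.
Proof.
set P := path_lits T pu in Hnf *.
have Hu_valid : valid_dt e P (Node x c0 c1).
  have := valid_dt_subtree (is_dt_valid HT) Hu; rewrite cats0.
  by apply: valid_dt_perm; rewrite perm_rev.
rewrite /weightP Hu (sum_pweight_all_pos S Hu_valid).
rewrite ler_pdivrMr ?ltr0n ?(valid_dt_cnt Hu_valid) //.
case: (boolP [exists y in S, occurs y P]) => [/exists_inP[y yS yP] | /exists_inPn fresh].
  by rewrite (cnt_fresh_occurs e yS yP) mulr_ge0 ?alpha_ge0.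
rewrite cnt_fresh_sols_true //; apply: card_sols_true_le_alpha => // y yS.
by rewrite fresh ?Hnf.
Qed.
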